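(* Let $n \ge 2$ and let $\mathcal{P} = \langle x, y \mid x^n y^{-2}, R\rangle$, $R \in F(x,y)$, be a regular presentation of $Q_{4n}$. Then there exist an integer $k \ge 0$ and nonzero integers $n_1, m_1, \dots, n_k, m_k$ such that $\mathcal{P} \simeq_Q \mathcal{P}_n(n_1,\dots,n_k;m_1,\dots,m_k)$.
   Context: $Q_{4n}$ is identified with $\langle x, y \mid x^n y^{-2}, xyxy^{-1} \rangle$ and $F(x,y)$ is the free group on $x,y$. A presentation $\langle x, y \mid x^n y^{-2}, R\rangle$ is regular if the map $x \mapsto x$, $y \mapsto y$ induces a group isomorphism from the group it presents to $Q_{4n}$. For integers $k\ge 0$, $n_1,\dots,n_k,m_1,\dots,m_k$, with $n_{k+1} = 1 - \sum_{i=1}^k n_i$, $m_{k+1} = 1 - \sum_{i=1}^k m_i$, $\mathcal{P}_n(n_1,\dots,n_k;m_1,\dots,m_k) = \langle x, y \mid x^n y^{-2},\ x^{n_1} y x^{m_1} y^{-1} \cdots x^{n_{k+1}} y x^{m_{k+1}} y^{-1} \rangle$. Two finite presentations on the same generators are $Q$-equivalent ($\simeq_Q$) if related by a finite sequence of the moves: replace a relator $r_i$ by $r_ir_j$ ($j\neq i$); replace $r_i$ by $r_i^{-1}$; replace $r_i$ by $wr_iw^{-1}$ for some $w$ in the free group on the generators. *)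

From mathcomp Require Import all_boot all_order all_algebra.
From Stdlib Require Import Relations.
Set Implicit Arguments. Unset Strict Implicit. Unset Printing Implicit Defensive.
Import GRing.Theory Num.Theory.

(* A letter: (generator, inverse flag); generator false = x, true = y. *)
Definition letter := (bool * bool)%type.
Definition word := seq letter.

Definition linv (a : letter) : letter := (a.1, ~~ a.2).

Definition reduce (w : word) : word :=
  foldr (fun a v => match v with
                    | b :: v' => if b == linv a then v' else a :: v
                    | [::] => [:: a]
                    end) [::] w.

Definition fmul (u v : word) : word := reduce (u ++ v).
Definition finv (u : word) : word := rev (map linv u).
Definition fconj (w r : word) : word := reduce (w ++ r ++ finv w).

Definition X : letter := (false, false).
Definition Y : letter := (true, false).

Definition xpow (z : int) : word :=
  if (0 <= z)%R then nseq `|z|%N X else nseq `|z|%N (linv X).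

Definition rel1 (n : nat) : word := reduce (nseq n X ++ nseq 2 (linv Y)).
Definition relQ : word := reduce [:: X; Y; X; linv Y].

Inductive ncl (S : seq word) : word -> Prop :=
| ncl_one : ncl S [::]
| ncl_step (s u v : word) (e : bool) :
    s \in S -> ncl S v ->
    ncl S (reduce (u ++ (if e then finv s else s) ++ finv u ++ v)).

(* <x,y | x^n y^{-2}, R> is regular: the identity on x, y induces an
   isomorphism onto Q_{4n} = <x,y | x^n y^{-2}, xyxy^{-1}>, i.e. the two
   normal closures in F(x,y) coincide. *)
Definition regular (n : nat) (R : word) : Prop :=
  forall w : word,
    ncl [:: rel1 n; reduce R] (reduce w) <-> ncl [:: rel1 n; relQ] (reduce w).

Inductive qmove : seq word -> seq word -> Prop :=
| qm_mul (P : seq word) (i j : nat) :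
    i < size P -> j < size P -> i != j ->
    qmove P (set_nth [::] P i (fmul (nth [::] P i) (nth [::] P j)))
| qm_inv (P : seq word) (i : nat) :
    i < size P ->
    qmove P (set_nth [::] P i (reduce (finv (nth [::] P i))))
| qm_conj (P : seq word) (i : nat) (w : word) :
    i < size P ->
    qmove P (set_nth [::] P i (fconj w (nth [::] P i))).

Definition Qeq : seq word -> seq word -> Prop := clos_refl_trans _ qmove.

Definition Pn_block (a b : int) : word := xpow a ++ [:: Y] ++ xpow b ++ [:: linv Y].

Definition Pn_rel (ns ms : seq int) : word :=
  let nk1 := (1 - \sum_(z <- ns) z)%R in
  let mk1 := (1 - \sum_(z <- ms) z)%R in
  reduce (flatten [seq Pn_block p.1 p.2 | p <- zip ns ms] ++ Pn_block nk1 mk1).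

Definition Pn_pres (n : nat) (ns ms : seq int) : seq word :=
  [:: rel1 n; Pn_rel ns ms].

(** The weight homomorphism x |-> 2, y |-> n kills x^n y^-2 and sends xyxy^-1 to 4.  As R and
    xyxy^-1 have the same normal closure modulo x^n y^-2, each divides the other in weight, so
    R has weight 4 after possibly inverting it; R also acts trivially in the regular
    representation of Q_4n.  Modulo x^n y^-2 and conjugation, a left-to-right scan rewrites R as
    a product of blocks x^a y x^b y^-1 (a trailing y is excluded by the action).  The two
    invariants give sum a + sum b = 2 and sum a = sum b (mod 2n), and prepending blocks
    x^-+n y x^+-n y^-1, which are trivial modulo x^n y^-2, makes both sums equal to 1.  Finally two
    adjacent blocks with a zero exponent at their junction merge into one, and a leading block
    x^0 y x^b y^-1 is rotated to the end and merged there; when no merge is possible, all blocks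
    but the last have nonzero exponents, and the last one is fixed by the two sums. *)

From Pilot Require Import Defs.
From mathcomp Require Import all_boot all_order all_algebra.
From mathcomp Require Import zify ring.
From Stdlib Require Import Relations.
Import Pilot.Defs.
Set Implicit Arguments. Unset Strict Implicit. Unset Printing Implicit Defensive.
Import GRing.Theory Num.Theory.

(** * Free reduction *)

Definition reduce_step (a : letter) (v : word) : word :=
  if v is b :: v' then (if b == linv a then v' else a :: v) else [:: a].

Definition reduced (w : word) : bool := sorted (fun a b => b != linv a) w.

Lemma reduce_cons a w : reduce (a :: w) = reduce_step a (reduce w).
Proof. by []. Qed.

Lemma reduce_cat u v : reduce (u ++ v) = foldr reduce_step (reduce v) u.
Proof. exact: foldr_cat. Qed.

Lemma linvK : involutive linv.
Proof. by case=> a b; rewrite /linv /= negbK. Qed.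

Lemma reduced_step a v : reduced v -> reduced (reduce_step a v).
Proof.
case: v => [|b v] //= rv; case: ifP => [_ | /negbT ba]; last by rewrite /= ba.
exact: path_sorted rv.
Qed.

Lemma reduced_foldr u v : reduced v -> reduced (foldr reduce_step v u).
Proof. by elim: u => //= a u IHu /IHu; apply: reduced_step. Qed.

Lemma reduced_reduce w : reduced (reduce w).
Proof. exact: reduced_foldr. Qed.

Lemma reduce_id w : reduced w -> reduce w = w.
Proof.
elim: w => // a w IHw rw; rewrite reduce_cons IHw; last exact: path_sorted rw.
by case: w rw {IHw} => //= b w /andP[/negbTE ->].
Qed.

Lemma reduceK w : reduce (reduce w) = reduce w.
Proof. exact/reduce_id/reduced_reduce. Qed.

Lemma reduce_stepK a v : reduced v -> reduce_step a (reduce_step (linv a) v) = v.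
Proof.
case: v => [|b v] /=; first by rewrite eqxx.
rewrite linvK; case: eqP => [-> | ba] rv; last by rewrite /= eqxx.
by case: v rv => //= c v /andP[/negbTE ->].
Qed.

Lemma foldr_reduce_step u v :
  reduced v -> foldr reduce_step v (reduce u) = foldr reduce_step v u.
Proof.
move=> rv; elim: u => // a u IHu; rewrite reduce_cons /= -IHu.
case: (reduce u) => //= b t; case: eqP => // ->.
by rewrite reduce_stepK // reduced_foldr.
Qed.

Lemma reduce_catl u v : reduce (reduce u ++ v) = reduce (u ++ v).
Proof. by rewrite !reduce_cat foldr_reduce_step // reduced_reduce. Qed.

Lemma reduce_catr u v : reduce (u ++ reduce v) = reduce (u ++ v).
Proof. by rewrite !reduce_cat reduceK. Qed.

Lemma reduce_cat_congr u v a b :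
  reduce a = reduce b -> reduce (u ++ a ++ v) = reduce (u ++ b ++ v).
Proof.
by move=> eab; rewrite -(reduce_catr u (a ++ v)) -(reduce_catl a v) eab reduce_catl reduce_catr.
Qed.

Lemma reduce_prefix u a b : reduce a = reduce b -> reduce (u ++ a) = reduce (u ++ b).
Proof. by move=> eab; rewrite -reduce_catr eab reduce_catr. Qed.

Lemma finv_cat u v : finv (u ++ v) = finv v ++ finv u.
Proof. by rewrite /finv map_cat rev_cat. Qed.

Lemma finvK : involutive finv.
Proof. by move=> w; rewrite /finv map_rev revK (mapK linvK). Qed.

Lemma finv_nseq m a : finv (nseq m a) = nseq m (linv a).
Proof. by rewrite /finv map_nseq rev_nseq. Qed.

Lemma reduced_finv w : reduced w -> reduced (finv w).
Proof.
rewrite /reduced /finv rev_sorted sorted_map => rw.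
by apply: sub_sorted rw => a b /=; rewrite linvK eq_sym.
Qed.

Lemma reduce_cat_finvr w : reduce (w ++ finv w) = [::].
Proof.
elim: w => // a w IHw.
have -> : (a :: w) ++ finv (a :: w) = [:: a] ++ (w ++ finv w) ++ [:: linv a].
  by rewrite (finv_cat [:: a]) catA.
by rewrite (@reduce_cat_congr _ _ _ [::] IHw) /= eqxx.
Qed.

Lemma reduce_cat_finvl w : reduce (finv w ++ w) = [::].
Proof. by rewrite -{2}(finvK w) reduce_cat_finvr. Qed.

Lemma reduce_cancel_finv u v w : reduce (u ++ w ++ finv w ++ v) = reduce (u ++ v).
Proof.
by rewrite (catA w) (@reduce_cat_congr u v _ [::]) ?reduce_cat_finvr.
Qed.

Lemma reduce_cancel u v a : reduce (u ++ [:: a, linv a & v]) = reduce (u ++ v).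
Proof. exact: (reduce_cancel_finv u v [:: a]). Qed.

Lemma reduce_cancelV u v a : reduce (u ++ [:: linv a, a & v]) = reduce (u ++ v).
Proof. by rewrite -{2}(linvK a) reduce_cancel. Qed.

Lemma rel1E n : rel1 n = nseq n X ++ [:: linv Y; linv Y].
Proof. by rewrite /rel1 reduce_id //; elim: n => // -[|n]. Qed.

Lemma finv_rel1 n : finv (rel1 n) = [:: Y; Y] ++ nseq n (linv X).
Proof. by rewrite rel1E finv_cat finv_nseq. Qed.

Lemma reduced_rel1 n : reduced (rel1 n).
Proof. exact: reduced_reduce. Qed.

Section XPowers.
Local Open Scope ring_scope.

Lemma xpow_nat (m : nat) : xpow m%:Z = nseq m X.
Proof. by []. Qed.

Lemma xpowNn (m : nat) : xpow (- m%:Z) = nseq m (linv X).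
Proof. by case: m. Qed.

Lemma reduced_xpow c : reduced (xpow c).
Proof. by rewrite /xpow; case: ifP => _; elim: `|c|%N => // -[]. Qed.

Lemma reduce_step_X_xpow c : reduce_step X (xpow c) = xpow (c + 1).
Proof.
case: c => m.
  have -> : Posz m + 1 = Posz m.+1 by lia.
  by rewrite /xpow /=; case: m.
have -> : Negz m + 1 = - m%:Z by rewrite NegzE; lia.
by rewrite xpowNn /xpow /=.
Qed.

Lemma reduce_step_XV_xpow c : reduce_step (linv X) (xpow c) = xpow (c - 1).
Proof.
case: c => [[|m] | m] //.
  have -> : Posz m.+1 - 1 = Posz m by lia.
  by rewrite /xpow /=.
by have -> : Negz m - 1 = Negz m.+1 by lia.
Qed.

Lemma reduce_xpowD a b : reduce (xpow a ++ xpow b) = xpow (a + b).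
Proof.
case: a => m; last rewrite NegzE xpowNn.
  elim: m => [|m IHm]; first by rewrite add0r reduce_id ?reduced_xpow.
  by rewrite [_ ++ _]/= reduce_cons IHm reduce_step_X_xpow; congr xpow; lia.
elim: m.+1 => [|k IHk]; first by rewrite add0r reduce_id ?reduced_xpow.
by rewrite [_ ++ _]/= reduce_cons IHk reduce_step_XV_xpow; congr xpow; lia.
Qed.

Lemma reduce_xpowD_cat a b w : reduce (xpow a ++ xpow b ++ w) = reduce (xpow (a + b) ++ w).
Proof. by rewrite catA -reduce_catl reduce_xpowD. Qed.

End XPowers.

(** * Two invariants of the normal closure *)

Section Weight.
Local Open Scope ring_scope.
Variable n : nat.

Definition letter_weight (a : letter) : int :=
  let w := if a.1 then n%:Z else 2 in if a.2 then - w else w.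

Definition weight (w : word) : int := \sum_(a <- w) letter_weight a.

Lemma weight_cat u v : weight (u ++ v) = weight u + weight v.
Proof. exact: big_cat. Qed.

Lemma letter_weight_linv a : letter_weight (linv a) = - letter_weight a.
Proof. by case: a => [[] []]; rewrite /= ?opprK. Qed.

Lemma weight_cons a w : weight (a :: w) = letter_weight a + weight w.
Proof. exact: big_cons. Qed.

Lemma weight_reduce w : weight (reduce w) = weight w.
Proof.
elim: w => // a w IHw; rewrite reduce_cons weight_cons -IHw.
case: (reduce w) => [|b v] /=; first by rewrite weight_cons.
by case: eqP => [-> | _]; rewrite !weight_cons // letter_weight_linv addNKr.
Qed.

Lemma weight_finv w : weight (finv w) = - weight w.
Proof.
rewrite /weight big_rev big_map -sumrN.
by apply: eq_bigr => a _; apply: letter_weight_linv.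
Qed.

Lemma weight_nseq m a : weight (nseq m a) = letter_weight a *+ m.
Proof. by rewrite /weight big_nseq; elim: m => //= m ->; rewrite mulrS. Qed.

Lemma weight_rel1 : weight (rel1 n) = 0.
Proof.
rewrite rel1E weight_cat weight_nseq /weight !big_cons big_nil /letter_weight /=.
by rewrite -mulr_natr; lia.
Qed.

Lemma weight_relQ : weight relQ = 4.
Proof. by rewrite /weight /= !big_cons big_nil /letter_weight /=; lia. Qed.

Lemma ncl_dvdz_weight S d w :
  ncl S w -> {in S, forall s, (d %| weight s)%Z} -> (d %| weight w)%Z.
Proof.
move=> + dS; elim=> [|s u v e Ss _ dv]; first by rewrite /weight big_nil dvdz0.
have ds : (d %| weight (if e then finv s else s))%Z.
  by case: e; rewrite ?weight_finv ?rpredN dS.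
rewrite weight_reduce !weight_cat weight_finv addrCA addNKr.
exact: rpredD.
Qed.

End Weight.

Section LetterAction.
Variables (T : Type) (act : letter -> T -> T).
Hypothesis act_linvK : forall a, cancel (act (linv a)) (act a).

Definition wact (w : word) (s : T) : T := foldr act s w.

Definition acts_trivially (w : word) : Prop := forall s, wact w s = s.

Lemma wact_cat u v s : wact (u ++ v) s = wact u (wact v s).
Proof. exact: foldr_cat. Qed.

Lemma wact_reduce w s : wact (reduce w) s = wact w s.
Proof.
elim: w => // a w IHw; rewrite reduce_cons /= -IHw.
by case: (reduce w) => [|b v] //=; case: eqP => [-> | _] //=; rewrite act_linvK.
Qed.

Lemma wact_finvK w : cancel (wact w) (wact (finv w)).
Proof. by move=> s; rewrite -wact_cat -wact_reduce reduce_cat_finvl. Qed.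

Lemma wact_finvKV w : cancel (wact (finv w)) (wact w).
Proof. by move=> s; rewrite -wact_cat -wact_reduce reduce_cat_finvr. Qed.

Lemma ncl_acts_trivially S w :
  ncl S w -> {in S, forall s, acts_trivially s} -> acts_trivially w.
Proof.
move=> + tS; elim=> [|s u v e Ss _ tv] // x.
have ts : acts_trivially (if e then finv s else s).
  case: e => y; last exact: tS.
  by rewrite -{1}(tS s Ss y) wact_finvK.
by rewrite wact_reduce !wact_cat tv ts wact_finvKV.
Qed.

End LetterAction.

Section Q4nAction.
Local Open Scope ring_scope.
Variable n : nat.
Hypothesis n_gt0 : (0 < n)%N.

(* (z, e) stands for x^z y^e in Q_4n, on which letters act by left multiplication, using
   y x^z = x^-z y and y^2 = x^n. *)
Definition q4n_act (a : letter) (s : 'Z_(2 * n) * bool) : 'Z_(2 * n) * bool :=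
  let: (z, e) := s in
  match a with
  | (false, false) => (z + 1, e)
  | (false, true) => (z - 1, e)
  | (true, false) => if e then (n%:R - z, false) else (- z, true)
  | (true, true) => if e then (- z, false) else (- z - n%:R, true)
  end.

Lemma Zp_addnn (z : 'Z_(2 * n)) : z + n%:R + n%:R = z.
Proof. by rewrite -addrA -natrD addnn -mul2n pchar_Zp ?addr0 //; lia. Qed.

Ltac Zp_ring := first [ring | rewrite -[RHS]Zp_addnn; ring | rewrite -[LHS]Zp_addnn; ring].

Lemma q4n_actK a : cancel (q4n_act (linv a)) (q4n_act a).
Proof. by case=> z e; case: a => [[] []]; case: e => /=; congr (_, _); Zp_ring. Qed.

Lemma q4n_nseqX m z e : wact q4n_act (nseq m X) (z, e) = (z + m%:R, e).
Proof. by elim: m => [|m /= ->]; rewrite ?addr0 // /= -addrA -mulrSr. Qed.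

Lemma q4n_nseqXV m z e : wact q4n_act (nseq m (linv X)) (z, e) = (z - m%:R, e).
Proof. by elim: m => [|m /= ->]; rewrite ?subr0 // /= -addrA -opprD -mulrSr. Qed.

Lemma q4n_xpow c z e : wact q4n_act (xpow c) (z, e) = (z + c%:~R, e).
Proof.
case: c => m; first by rewrite q4n_nseqX.
by rewrite NegzE xpowNn q4n_nseqXV mulrNz.
Qed.

Lemma q4n_rel1 : acts_trivially q4n_act (rel1 n).
Proof. by case=> z []; rewrite rel1E wact_cat /= q4n_nseqX; congr (_, _); Zp_ring. Qed.

Lemma q4n_relQ : acts_trivially q4n_act relQ.
Proof. by case=> z [] /=; congr (_, _); Zp_ring. Qed.

Lemma q4n_block c d z e :
  wact q4n_act (Pn_block c d) (z, e) = (z + c%:~R - d%:~R, e).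
Proof.
rewrite /Pn_block !wact_cat.
by case: e; rewrite /= q4n_xpow /= q4n_xpow; congr (_, _); Zp_ring.
Qed.

End Q4nAction.

Arguments q4n_act : clear implicits.

(** * Moves on the second relator *)

Section QSimilarity.
Variable n : nat.

Inductive qstep : word -> word -> Prop :=
| QstepReduce a b of reduce a = reduce b : qstep a b
| QstepConj w a : qstep a (w ++ a ++ finv w)
| QstepRel a : qstep a (a ++ rel1 n)
| QstepRelV a : qstep a (a ++ finv (rel1 n)).

Definition qsim : word -> word -> Prop := clos_refl_trans _ qstep.

Lemma qstep_Qeq a b : qstep a b -> Qeq [:: rel1 n; reduce a] [:: rel1 n; reduce b].
Proof.
case=> {a b} [a b -> | w a | a | a]; first exact: rt_refl.
- have := @qm_conj [:: rel1 n; reduce a] 1 w erefl.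
  by rewrite /= /fconj (@reduce_cat_congr _ _ (reduce a) a) ?reduceK //; apply: rt_step.
- have := @qm_mul [:: rel1 n; reduce a] 1 0 erefl erefl erefl.
  by rewrite /= /fmul reduce_catl; apply: rt_step.
have rVr : reduce (finv (reduce (finv (rel1 n)))) = rel1 n.
  by rewrite !reduce_id ?finvK ?reduced_finv ?reduced_rel1.
apply: rt_trans; first exact/rt_step/(@qm_inv [:: rel1 n; reduce a] 0).
apply: rt_trans; first exact/rt_step/(@qm_mul [:: reduce (finv (rel1 n)); reduce a] 1 0).
have := @qm_inv [:: reduce (finv (rel1 n)); fmul (reduce a) (reduce (finv (rel1 n)))] 0 erefl.
by rewrite /= rVr /fmul reduce_catl reduce_catr; apply: rt_step.
Qed.

Lemma qsim_Qeq a b : qsim a b -> Qeq [:: rel1 n; reduce a] [:: rel1 n; reduce b].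
Proof.
elim=> [x y /qstep_Qeq // | x | x y z _ Qxy _ Qyz]; first exact: rt_refl.
exact: rt_trans Qyz.
Qed.

Lemma qsim_weight a b : qsim a b -> weight n a = weight n b.
Proof.
elim=> // [x y | x y z _ -> //]; case=> {x y} [x y exy | w x | x | x].
- by rewrite -weight_reduce exy weight_reduce.
- by rewrite !weight_cat weight_finv addrCA subrr addr0.
- by rewrite weight_cat weight_rel1 addr0.
by rewrite weight_cat weight_finv weight_rel1 oppr0 addr0.
Qed.

Lemma qsim_acts_trivially T (act : letter -> T -> T) a b :
  (forall c, cancel (act (linv c)) (act c)) -> acts_trivially act (rel1 n) ->
  qsim a b -> acts_trivially act a -> acts_trivially act b.
Proof.
move=> actK t1; elim=> // [x y | x y z _ txy _ tyz /txy /tyz //].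
case=> {x y} [x y exy | w x | x | x] ta s.
- by rewrite -(wact_reduce actK) -exy (wact_reduce actK).
- by rewrite !wact_cat ta wact_finvKV.
- by rewrite wact_cat t1 ta.
by rewrite wact_cat -{1}(t1 s) wact_finvK ?ta.
Qed.

Lemma qsim_refl a : qsim a a.
Proof. exact: rt_refl. Qed.

Lemma qsim_trans b a c : qsim a b -> qsim b c -> qsim a c.
Proof. exact: rt_trans. Qed.

Lemma qsim_reduce a b : reduce a = reduce b -> qsim a b.
Proof. by move=> eab; apply/rt_step/QstepReduce. Qed.

Lemma qsim_rot p q : qsim (p ++ q) (q ++ p).
Proof.
apply: (@qsim_trans (finv p ++ (p ++ q) ++ finv (finv p))); first exact/rt_step/QstepConj.
by apply: qsim_reduce; rewrite finvK -catA catA -reduce_catl reduce_cat_finvl.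
Qed.

Lemma qsim_insert r u v :
  (forall a, qsim a (a ++ r)) -> qsim (u ++ v) (u ++ r ++ v).
Proof.
move=> qr; apply: qsim_trans (qsim_rot u v) _.
apply: qsim_trans (qr _) _.
by rewrite -catA (catA u); apply: qsim_rot.
Qed.

Lemma qsim_catr_rel1 a : qsim a (a ++ rel1 n).
Proof. exact/rt_step/QstepRel. Qed.

Lemma qsim_catr_rel1V a : qsim a (a ++ finv (rel1 n)).
Proof. exact/rt_step/QstepRelV. Qed.

Lemma qsim_catr_conj r w :
  (forall a, qsim a (a ++ r)) -> forall a, qsim a (a ++ w ++ r ++ finv w).
Proof.
move=> qr a; apply: (@qsim_trans (a ++ w ++ finv w)).
  by apply: qsim_reduce; rewrite -reduce_catr reduce_cat_finvr cats0.
by rewrite !(catA a w); apply: qsim_insert.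
Qed.

Lemma qsim_ins_rel1 u v : qsim (u ++ v) (u ++ rel1 n ++ v).
Proof. exact/qsim_insert/qsim_catr_rel1. Qed.

Lemma qsim_ins_rel1V u v : qsim (u ++ v) (u ++ finv (rel1 n) ++ v).
Proof. exact/qsim_insert/qsim_catr_rel1V. Qed.

Lemma qsim_ins_conj_rel1 w u v : qsim (u ++ v) (u ++ w ++ rel1 n ++ finv w ++ v).
Proof.
have -> : w ++ rel1 n ++ finv w ++ v = (w ++ rel1 n ++ finv w) ++ v by rewrite -!catA.
exact/qsim_insert/qsim_catr_conj/qsim_catr_rel1.
Qed.

Lemma qsim_ins_conj_rel1V w u v :
  qsim (u ++ v) (u ++ w ++ finv (rel1 n) ++ finv w ++ v).
Proof.
have -> : w ++ finv (rel1 n) ++ finv w ++ v = (w ++ finv (rel1 n) ++ finv w) ++ v.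
  by rewrite -!catA.
exact/qsim_insert/qsim_catr_conj/qsim_catr_rel1V.
Qed.

End QSimilarity.

(** * Block words *)

Section Blocks.
Local Open Scope ring_scope.

Definition blocks (L : seq (int * int)) : word :=
  flatten [seq Pn_block p.1 p.2 | p <- L].

Definition sumfst (L : seq (int * int)) : int := \sum_(p <- L) p.1.
Definition sumsnd (L : seq (int * int)) : int := \sum_(p <- L) p.2.

Lemma blocks_cons p L : blocks (p :: L) = Pn_block p.1 p.2 ++ blocks L.
Proof. by []. Qed.

Lemma blocks_cat L1 L2 : blocks (L1 ++ L2) = blocks L1 ++ blocks L2.
Proof. by rewrite /blocks map_cat flatten_cat. Qed.

Lemma blocks_rcons L p : blocks (rcons L p) = blocks L ++ Pn_block p.1 p.2.
Proof. by rewrite -cats1 blocks_cat /blocks /= cats0. Qed.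

Lemma sumfst_cons p L : sumfst (p :: L) = p.1 + sumfst L.
Proof. exact: big_cons. Qed.

Lemma sumsnd_cons p L : sumsnd (p :: L) = p.2 + sumsnd L.
Proof. exact: big_cons. Qed.

Lemma sumfst_rcons L p : sumfst (rcons L p) = sumfst L + p.1.
Proof. exact: big_rcons. Qed.

Lemma sumsnd_rcons L p : sumsnd (rcons L p) = sumsnd L + p.2.
Proof. exact: big_rcons. Qed.

Lemma weight_xpow n c : weight n (xpow c) = 2 * c.
Proof.
by case: c => m; rewrite weight_nseq -mulr_natr ?NegzE /letter_weight /=; lia.
Qed.

Lemma weight_blocks n L : weight n (blocks L) = 2 * (sumfst L + sumsnd L).
Proof.
elim: L => [|p L IHL]; first by rewrite /weight /sumfst /sumsnd !big_nil addr0 mulr0.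
rewrite blocks_cons /Pn_block !weight_cat IHL !weight_xpow /sumfst /sumsnd !big_cons.
by rewrite /weight !big_cons !big_nil /letter_weight /=; lia.
Qed.

Lemma q4n_blocks n L z e : (0 < n)%N ->
  wact (q4n_act n) (blocks L) (z, e) = (z + (sumfst L - sumsnd L)%:~R, e).
Proof.
move=> n_gt0; elim: L z => [|p L IHL] z.
  by rewrite /sumfst /sumsnd !big_nil subr0 addr0.
rewrite blocks_cons wact_cat IHL q4n_block // /sumfst /sumsnd !big_cons.
by congr (_, _); rewrite !rmorphB !rmorphD /=; ring.
Qed.

End Blocks.

Section BlockForm.
Local Open Scope ring_scope.
Variable n : nat.

Definition ybit (e : bool) : word := if e then [:: Y] else [::].

(* The state (L, e) stands for blocks L ++ y^e.  A letter x^+-1 read after y becomes the block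
   y x^+-1 y^-1; y^-1 read without a pending y becomes y x^-n, and y read after y becomes the
   block x^n, as y^2 = x^n. *)
Definition block_step (st : seq (int * int) * bool) (a : letter) :
    seq (int * int) * bool :=
  let: (L, e) := st in
  match e, a with
  | false, (false, false) => (rcons L (1, 0), false)
  | false, (false, true) => (rcons L (-1, 0), false)
  | false, (true, false) => (L, true)
  | false, (true, true) => (rcons L (0, - n%:Z), true)
  | true, (false, false) => (rcons L (0, 1), true)
  | true, (false, true) => (rcons L (0, -1), true)
  | true, (true, false) => (rcons L (n%:Z, 0), false)
  | true, (true, true) => (L, false)
  end.

Definition block_form (w : word) : seq (int * int) * bool :=
  foldl block_step ([::], false) w.

Lemma qsim_block_step L e a v :
  qsim n (blocks L ++ ybit e ++ a :: v)
         (blocks (block_step (L, e) a).1 ++ ybit (block_step (L, e) a).2 ++ v).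
Proof.
case: e; case: a => [[] []]; rewrite /= ?blocks_rcons /Pn_block /= -?catA /=.
- exact/qsim_reduce/reduce_cancel.
- apply: qsim_trans (qsim_ins_rel1 n _ _) (qsim_reduce n _).
  rewrite rel1E /xpow /= -catA; do 2!apply: reduce_prefix.
  by rewrite (reduce_cancelV [:: linv Y]) (reduce_cancelV [::]) (reduce_cancel [::]).
- by apply/qsim_reduce/reduce_prefix; rewrite (reduce_cancelV [:: Y; linv X]).
- by apply/qsim_reduce/reduce_prefix; rewrite (reduce_cancelV [:: Y; X]).
- rewrite -[blocks L ++ _ :: v]/(blocks L ++ [:: linv Y] ++ v) catA.
  apply: qsim_trans (qsim_ins_rel1V n _ _) (qsim_reduce n _).
  rewrite finv_rel1 xpowNn -!catA; apply: reduce_prefix.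
  by rewrite (reduce_cancelV [::] _ Y) (reduce_cancelV (Y :: _) _ Y).
- exact: qsim_refl.
- by apply/qsim_reduce/reduce_prefix; rewrite (reduce_cancel [:: linv X]).
by apply/qsim_reduce/reduce_prefix; rewrite (reduce_cancel [:: X]).
Qed.

Lemma qsim_block_form w v :
  qsim n (w ++ v) (blocks (block_form w).1 ++ ybit (block_form w).2 ++ v).
Proof.
elim/last_ind: w v => [|w a IHw] v; first exact: qsim_refl.
rewrite /block_form foldl_rcons -/(block_form w) cat_rcons.
by apply: qsim_trans (IHw _) _; case: (block_form w) => L e; apply: qsim_block_step.
Qed.

End BlockForm.

Section Balancing.
Local Open Scope ring_scope.
Variable n : nat.

Lemma qsim_blocks_nNn L : qsim n (blocks L) (blocks ((n%:Z, - n%:Z) :: L)).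
Proof.
apply: qsim_trans (qsim_ins_rel1 n [::] _) _.
apply: qsim_trans (qsim_ins_conj_rel1V n [:: Y] (rel1 n) _) (qsim_reduce n _).
rewrite blocks_cons /Pn_block xpow_nat xpowNn finv_rel1 rel1E -!catA; apply: reduce_prefix.
by rewrite (reduce_cancelV [:: linv Y] _ Y) (reduce_cancelV [::] _ Y).
Qed.

Lemma qsim_blocks_Nnn L : qsim n (blocks L) (blocks ((- n%:Z, n%:Z) :: L)).
Proof.
apply: qsim_trans (qsim_ins_conj_rel1 n [:: linv Y] [::] _) _.
apply: qsim_trans (qsim_ins_conj_rel1V n (nseq n (linv X)) [::] _) (qsim_reduce n _).
rewrite blocks_cons /Pn_block xpow_nat xpowNn finv_rel1 rel1E !cat0s -!catA.
apply: reduce_prefix; rewrite (reduce_cancel_finv [:: Y; Y]) (reduce_cancel [:: Y] _ Y).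
by do 2!apply: reduce_prefix; rewrite (reduce_cancelV [:: linv Y] _ Y).
Qed.

Lemma qsim_blocks_shift L t : exists L', [/\ qsim n (blocks L) (blocks L'),
  sumfst L' = sumfst L - n%:Z * t & sumsnd L' = sumsnd L + n%:Z * t].
Proof.
have iter p : (forall L, qsim n (blocks L) (blocks (p :: L))) ->
    forall m : nat, exists L', [/\ qsim n (blocks L) (blocks L'),
      sumfst L' = sumfst L + p.1 * m%:Z & sumsnd L' = sumsnd L + p.2 * m%:Z].
  move=> qp; elim=> [|m [L' [qL' s1 s2]]].
    by exists L; rewrite !mulr0 !addr0; split=> //; apply: qsim_refl.
  exists (p :: L'); rewrite sumfst_cons sumsnd_cons s1 s2.
  by split; [apply: qsim_trans qL' (qp L') | lia ..].
case: (lerP 0 t) => t0.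
  have [L' [qL' s1 s2]] := iter _ qsim_blocks_Nnn `|t|%N.
  by exists L'; rewrite s1 s2 gez0_abs //=; split=> //; lia.
have [L' [qL' s1 s2]] := iter _ qsim_blocks_nNn `|t|%N.
by exists L'; rewrite s1 s2 ltz0_abs //=; split=> //; lia.
Qed.

Lemma Zp_intr_eq0 p (z : int) : (1 < p)%N -> (z%:~R : 'Z_p) = 0 -> (p%:Z %| z)%Z.
Proof.
move=> p_gt1; case: z => m.
  by move=> /(congr1 val); rewrite /= -pmulrn val_Zp_nat // => /eqP.
rewrite NegzE mulrNz => /eqP; rewrite oppr_eq0 => /eqP /(congr1 val).
by rewrite /= -pmulrn val_Zp_nat // => /eqP mp; rewrite rpredN.
Qed.

Lemma qsim_balanced_blocks A : (1 < n)%N ->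
    weight n A = 4 -> acts_trivially (q4n_act n) A ->
  exists L, [/\ qsim n A (blocks L), sumfst L = 1 & sumsnd L = 1].
Proof.
move=> n_gt1 wA tA; have n_gt0 : (0 < n)%N by lia.
have := qsim_block_form n A [::]; rewrite cats0.
case: (block_form n A) => L e /= qL.
have tL := qsim_acts_trivially (q4n_actK n_gt0) (q4n_rel1 n_gt0) qL tA.
have e0 : e = false.
  by case: e tL {qL} => // /(_ (0, false)); rewrite wact_cat /= q4n_blocks.
move: qL tL; rewrite e0 [ybit false]/= !cats0 => qL tL.
have sum2 : sumfst L + sumsnd L = 2.
  by move: (qsim_weight qL); rewrite wA weight_blocks; lia.
have /dvdzP[t dt] : ((2 * n)%:Z %| sumfst L - sumsnd L)%Z.
  apply: Zp_intr_eq0; first by lia.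
  by have := tL (0, false); rewrite q4n_blocks // add0r => -[].
have [L' [qL' s1 s2]] := qsim_blocks_shift L t.
by exists L'; split; [exact: qsim_trans qL qL' | lia ..].
Qed.

End Balancing.

Section Merge.
Local Open Scope ring_scope.

Lemma reduce_Pn_block_merge a b c d : (b == 0) || (c == 0) ->
  reduce (Pn_block a b ++ Pn_block c d) = reduce (Pn_block (a + c) (b + d)).
Proof.
case/orP=> /eqP->; rewrite /Pn_block -!catA ?add0r ?addr0.
  by rewrite (reduce_cancel (xpow a) _ Y) reduce_xpowD_cat.
by do 2!apply: reduce_prefix; rewrite (reduce_cancelV (xpow b) _ Y) reduce_xpowD_cat.
Qed.

Definition separated (p q : int * int) : bool := (p.2 != 0) && (q.1 != 0).

Definition nonzero_block (p : int * int) : bool := (p.1 != 0) && (p.2 != 0).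

Lemma reduce_blocks_merge L1 p q L2 : ~~ separated p q ->
  reduce (blocks (L1 ++ [:: p, q & L2])) =
  reduce (blocks (L1 ++ (p.1 + q.1, p.2 + q.2) :: L2)).
Proof.
rewrite negb_and !negbK => pq; rewrite !blocks_cat !blocks_cons (catA (Pn_block _ _)).
by rewrite (reduce_cat_congr _ _ (reduce_Pn_block_merge _ _ pq)).
Qed.

Lemma not_sorted_split (T : Type) (r : rel T) s : ~~ sorted r s ->
  exists s1 x y s2, s = s1 ++ [:: x, y & s2] /\ ~~ r x y.
Proof.
case: s => // x s; elim: s x => //= y s IHs x.
case: (boolP (r x y)) => [rxy /= /IHs[s1 [a [b [s2 [-> ab]]]]] | nrxy _].
  by exists (x :: s1), a, b, s2.
by exists [::], x, y, s.
Qed.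

Lemma path_separated_nonzero p L :
  p.1 != 0 -> path separated p L -> all nonzero_block (belast p L).
Proof.
elim: L p => //= q L IHL p p1 /andP[/andP[p2 q1] pL].
by rewrite /nonzero_block p1 p2 (IHL q).
Qed.

End Merge.

Section Normalization.
Local Open Scope ring_scope.
Variable n : nat.

Lemma qsim_blocks_merge L : ~~ sorted separated L ->
  exists L', [/\ qsim n (blocks L) (blocks L'), (size L' < size L)%N, L' != [::],
                 sumfst L' = sumfst L & sumsnd L' = sumsnd L].
Proof.
case/not_sorted_split=> [L1 [p [q [L2 [-> pq]]]]].
exists (L1 ++ (p.1 + q.1, p.2 + q.2) :: L2); split.
- by apply: qsim_reduce; apply: reduce_blocks_merge.
- by rewrite !size_cat /=; lia.
- by rewrite -size_eq0 size_cat addnS.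
- by rewrite /sumfst !big_cat !big_cons /= !addrA.
by rewrite /sumsnd !big_cat !big_cons /= !addrA.
Qed.

Lemma qsim_blocks_rot p L : qsim n (blocks (p :: L)) (blocks (rcons L p)).
Proof. by rewrite blocks_cons blocks_rcons; apply: qsim_rot. Qed.

Lemma blocks_normal_or_shorten L : L != [::] ->
  (exists N f, L = rcons N f /\ all nonzero_block N) \/
  exists L', [/\ qsim n (blocks L) (blocks L'), (size L' < size L)%N, L' != [::],
                 sumfst L' = sumfst L & sumsnd L' = sumsnd L].
Proof.
move=> L0; case: (boolP (sorted separated L)) => sortL; last first.
  by right; apply: qsim_blocks_merge.
case: L L0 sortL => // p L' _ sortL.
have [p1 | ] := boolP ((p.1 != 0) || (L' == [::])).
  left; exists (belast p L'), (last p L'); rewrite -lastI; split=> //.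
  by case/orP: p1 => [p1 | /eqP->] //; apply: path_separated_nonzero.
rewrite negb_or negbK => /andP[/eqP p10 L'0]; right.
have [|L'' [qL'' sL'' L''0 s1 s2]] := @qsim_blocks_merge (rcons L' p).
  case: L' L'0 {sortL} => // q L'' _.
  by rewrite rcons_cons /= rcons_path /separated p10 eqxx !andbF.
exists L''; split=> //.
- exact: qsim_trans (qsim_blocks_rot p L') qL''.
- by rewrite size_rcons in sL''.
- by rewrite s1 sumfst_rcons sumfst_cons addrC.
by rewrite s2 sumsnd_rcons sumsnd_cons addrC.
Qed.

Lemma qsim_blocks_normal L : L != [::] ->
  exists N f, [/\ qsim n (blocks L) (blocks (rcons N f)), all nonzero_block N,
                  sumfst (rcons N f) = sumfst L & sumsnd (rcons N f) = sumsnd L].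
Proof.
have [k] := ubnP (size L); elim: k L => // k IHk L /ltnSE sL L0.
case: (blocks_normal_or_shorten L0) => [[N [f [-> nzN]]] | [L' [qL' sL' L'0 s1 s2]]].
  by exists N, f; split=> //; apply: qsim_refl.
have [|N [f [qN nzN t1 t2]]] := IHk L' _ L'0; first exact: leq_trans sL' sL.
by exists N, f; rewrite t1 t2 s1 s2; split=> //; apply: qsim_trans qL' qN.
Qed.

End Normalization.

Lemma ncl_mem S s : s \in S -> ncl S (reduce s).
Proof. by move=> Ss; have := ncl_step [::] false Ss (ncl_one S); rewrite /= cats0. Qed.

Section Regular.
Local Open Scope ring_scope.
Variables (n : nat) (R : word).
Hypotheses (n_gt0 : (0 < n)%N) (regR : regular n R).

Lemma regular_ncl_relQ : ncl [:: rel1 n; relQ] (reduce R).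
Proof. by apply/regR; rewrite -[X in ncl _ X]reduceK; apply: ncl_mem; rewrite !inE eqxx orbT. Qed.

Lemma regular_weight : weight n R = 4 \/ weight n R = -4.
Proof.
have dvd4 : (weight n relQ %| weight n (reduce R))%Z.
  apply: ncl_dvdz_weight regular_ncl_relQ _ => s; rewrite !inE => /orP[] /eqP->.
    by rewrite weight_rel1 dvdz0.
  exact: dvdzz.
have dvdR : (weight n (reduce R) %| weight n (reduce relQ))%Z.
  apply: ncl_dvdz_weight ((regR relQ).2 (ncl_mem _)) _; first by rewrite !inE eqxx orbT.
  by move=> s; rewrite !inE => /orP[] /eqP->; rewrite ?weight_rel1 ?dvdz0 ?dvdzz.
move: dvd4 dvdR; rewrite !weight_reduce weight_relQ !dvdzE => dvd4 dvdR.
have : `|weight n R|%N = 4%N by apply/eqP; rewrite eqn_dvd dvdR dvd4.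
lia.
Qed.

Lemma regular_acts_trivially : acts_trivially (q4n_act n) (reduce R).
Proof.
apply: (ncl_acts_trivially (q4n_actK n_gt0) regular_ncl_relQ) => s.
by rewrite !inE => /orP[] /eqP->; [apply: q4n_rel1 | apply: q4n_relQ].
Qed.

Lemma regular_oriented : exists A, [/\ Qeq [:: rel1 n; reduce R] [:: rel1 n; reduce A],
  weight n A = 4 & acts_trivially (q4n_act n) A].
Proof.
have tR := regular_acts_trivially.
case: regular_weight; rewrite -weight_reduce => wR.
  by exists (reduce R); rewrite reduceK; split=> //; apply: rt_refl.
exists (finv (reduce R)); split.
- exact/rt_step/(@qm_inv [:: rel1 n; reduce R] 1).
- by rewrite weight_finv wR opprK.
by move=> s; rewrite -{1}(tR s) wact_finvK //; apply: q4n_actK.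
Qed.

End Regular.

Lemma Pn_pres_blocks n N f : sumfst (rcons N f) = 1%R -> sumsnd (rcons N f) = 1%R ->
  Pn_pres n (map fst N) (map snd N) = [:: rel1 n; reduce (blocks (rcons N f))].
Proof.
rewrite sumfst_rcons sumsnd_rcons /Pn_pres /Pn_rel zip_unzip !big_map => s1 s2.
have -> : (1 - \sum_(p <- N) p.1)%R = f.1 by rewrite -s1 /sumfst; lia.
have -> : (1 - \sum_(p <- N) p.2)%R = f.2 by rewrite -s2 /sumsnd; lia.
by rewrite blocks_rcons.
Qed.

Theorem theorem3p1 (n : nat) (R : word) :
  2 <= n -> regular n R ->
  exists ns ms : seq int,
    size ns = size ms /\
    all (fun z => z != 0%R) ns /\ all (fun z => z != 0%R) ms /\
    Qeq [:: rel1 n; reduce R] (Pn_pres n ns ms).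
Proof.
move=> n_gt1 regR; have n_gt0 : 0 < n by apply: ltnW.
have [A [QA wA tA]] := regular_oriented n_gt0 regR.
have [L [AL s1 s2]] := qsim_balanced_blocks n_gt1 wA tA.
have [|N [f [LN nzN t1 t2]]] := qsim_blocks_normal n (L := L).
  by apply: contra_eq_neq s1 => ->; rewrite /sumfst big_nil.
exists (map fst N), (map snd N); rewrite !size_map !all_map.
split=> //; split; first by apply: sub_all nzN => p /andP[].
split; first by apply: sub_all nzN => p /andP[].
rewrite (Pn_pres_blocks n (etrans t1 s1) (etrans t2 s2)).
exact: rt_trans QA (qsim_Qeq (qsim_trans AL LN)).
Qed.
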